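(* Let $G$ be a graph. If $H$ is a maximal $r$-correspondence-deletable subgraph of $G$ (i.e., no $r$-correspondence-deletable subgraph of $G$ properly contains $H$), then $G-V(H)$ does not contain an $r$-correspondence-deletable subgraph (with respect to $G-V(H)$).
   Context: All graphs are finite and simple. A correspondence assignment for a graph $H$ is a pair $(L,M)$ where $L$ assigns to each vertex $v$ a list $L(v)$ of colours and $M$ assigns to each edge $e=uv$ a partial matching $M_e$ between $\{u\}\times L(u)$ and $\{v\}\times L(v)$; an $(L,M)$-colouring is a choice $\varphi(v)\in L(v)$ for every $v$ such that for every edge $uv$, $(u,\varphi(u))$ and $(v,\varphi(v))$ are not matched in $M_{uv}$. A nonempty induced subgraph $H$ of a graph $G$ is $r$-correspondence-deletable (in $G$) if for every correspondence assignment $(L,M)$ of $H$ with $|L(v)|\ge r-(\deg_G(v)-\deg_H(v))$ for each $v\in V(H)$, $H$ has an $(L,M)$-colouring. *)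

From mathcomp Require Import all_boot.
Set Implicit Arguments. Unset Strict Implicit. Unset Printing Implicit Defensive.

(* A finite simple graph: vertex type T : finType, adjacency e : rel T,
   assumed symmetric and irreflexive in the theorem.
   Induced subgraphs are given by their vertex sets {set T}.
   Colours are natural numbers; a list L v is a duplicate-free seq nat. *)

Definition deg_in (T : finType) (e : rel T) (A : {set T}) (v : T) : nat :=
  #|[set u in A | e v u]|.

(* (L, M) is a correspondence assignment for the induced subgraph on S:
   L v is a list (duplicate-free) of colours; M u c v d means that
   (u, c) and (v, d) are matched in M_{uv}.  For every edge uv of G[S],
   M_{uv} is a partial matching between {u} x L(u) and {v} x L(v). *)
Definition corr_assignment (T : finType) (e : rel T) (S : {set T})
    (L : T -> seq nat) (M : T -> nat -> T -> nat -> bool) : Prop :=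
  (forall v, v \in S -> uniq (L v)) /\
  (forall u v, u \in S -> v \in S -> e u v ->
     (forall c d, M u c v d -> (c \in L u) /\ (d \in L v)) /\
     (forall c d, M u c v d = M v d u c) /\
     (forall c d d', M u c v d -> M u c v d' -> d = d')).

Definition LM_colouring (T : finType) (e : rel T) (S : {set T})
    (L : T -> seq nat) (M : T -> nat -> T -> nat -> bool) (phi : T -> nat) : Prop :=
  (forall v, v \in S -> phi v \in L v) /\
  (forall u v, u \in S -> v \in S -> e u v -> ~~ M u (phi u) v (phi v)).

(* H = G'[S] is an r-correspondence-deletable (nonempty induced) subgraph of
   the graph G' = G[A]. *)
Definition corr_deletable (T : finType) (e : rel T) (A : {set T}) (r : nat)
    (S : {set T}) : Prop :=
  S \subset A /\ S != set0 /\
  forall (L : T -> seq nat) (M : T -> nat -> T -> nat -> bool),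
    corr_assignment e S L M ->
    (forall v, v \in S -> r - (deg_in e A v - deg_in e S v) <= size (L v)) ->
    exists phi : T -> nat, LM_colouring e S L M phi.

From mathcomp Require Import all_boot.
From mathcomp Require Import zify.

Set Implicit Arguments.
Unset Strict Implicit.
Unset Printing Implicit Defensive.

(* If H is r-correspondence-deletable in G and H' is r-correspondence-deletable
   in G - V(H), then H + H' is r-correspondence-deletable in G.  Colour H'
   first: its list requirement inside G equals the one inside G - V(H).  Then
   remove from the list of each vertex v of H the colours matched to the colour
   of an H'-neighbour of v; as each M_uv is a matching, at most deg_H'(v)
   colours are lost, which is exactly what H + H' grants v on top of the
   requirement for H alone.  The pruned lists colour H, and the two colourings
   do not conflict on the edges between H and H'. *)

Lemma count_matched_le (X : eqType) (I : finType) (s : seq X) (N : {set I})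
    (m : I -> X -> bool) :
  uniq s -> (forall u c c', u \in N -> m u c -> m u c' -> c = c') ->
  count (fun c => [exists u in N, m u c]) s <= #|N|.
Proof.
move=> s_uniq m_fun; pose g c := [pick u in N | m u c].
rewrite -size_filter cardE; set t := filter _ s.
rewrite -(size_map g t) -(size_map Some (enum N)).
have g_match c : c \in t -> exists2 u, g c = Some u & (u \in N) && m u c.
  rewrite mem_filter => /andP [/existsP [u0 mu0] _].
  by rewrite /g; case: pickP => [u mu | /(_ u0)]; [exists u | rewrite mu0].
apply: uniq_leq_size.
  rewrite map_inj_in_uniq ?filter_uniq // => c c' /g_match [u -> /andP [uN mc]].
  by case/g_match => u' -> /andP [_ mc'] [eu]; apply: (m_fun u) => //; rewrite eu.
move=> _ /mapP [c /g_match [u -> /andP [uN _]] ->].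
by apply: map_f; rewrite mem_enum.
Qed.

Section InducedDegree.

Variables (T : finType) (e : rel T).

Lemma deg_inID (A B : {set T}) (v : T) :
  deg_in e (A :&: B) v + deg_in e (A :\: B) v = deg_in e A v.
Proof.
rewrite /deg_in -(cardsID B [set u in A | e v u]).
by congr (_ + _); apply: eq_card => u; rewrite !inE;
  case: (u \in A); case: (u \in B); case: (e v u).
Qed.

Lemma deg_inS (A B : {set T}) (v : T) :
  A \subset B -> deg_in e A v <= deg_in e B v.
Proof. by move=> AB; apply: subset_leq_card; rewrite !setIdE setSI. Qed.

End InducedDegree.

Definition restrict_match (T : finType) (L : T -> seq nat)
    (M : T -> nat -> T -> nat -> bool) (u : T) (c : nat) (v : T) (d : nat) :=
  [&& M u c v d, c \in L u & d \in L v].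

Section Assignments.

Variables (T : finType) (e : rel T).

Lemma corr_assignmentS (S U : {set T}) L M :
  S \subset U -> corr_assignment e U L M -> corr_assignment e S L M.
Proof.
move=> /subsetP SU [L_uniq M_match].
by split=> [v /SU | u v /SU uU /SU vU]; [apply: L_uniq | apply: M_match].
Qed.

Lemma corr_assignment_restrict (S : {set T}) L L' M :
  corr_assignment e S L M -> (forall v, v \in S -> uniq (L' v)) ->
  corr_assignment e S L' (restrict_match L' M).
Proof.
move=> [_ M_match] L'_uniq; split=> // u v uS vS euv.
have [_ [M_sym M_fun]] := M_match u v uS vS euv.
split; first by move=> c d /and3P [].
split=> [c d | c d d' /and3P [Md _ _] /and3P [Md' _ _]]; last exact: M_fun Md Md'.
by rewrite /restrict_match M_sym; case: (c \in L' u); rewrite ?andbT ?andbF.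
Qed.

Lemma LM_colouring_restrict (S : {set T}) L M phi :
  LM_colouring e S L (restrict_match L M) phi -> LM_colouring e S L M phi.
Proof.
move=> [phiL phiM]; split=> // u v uS vS euv.
by have := phiM u v uS vS euv; rewrite /restrict_match !phiL ?andbT.
Qed.

End Assignments.

Section Residual.

Variables (T : finType) (e : rel T).
Hypothesis e_sym : symmetric e.
Variables (S S' : {set T}) (L : T -> seq nat) (M : T -> nat -> T -> nat -> bool).
Hypothesis LM : corr_assignment e (S :|: S') L M.
Variable phi : T -> nat.
Hypothesis phi_col : LM_colouring e S' L M phi.

Definition blocked (v : T) (c : nat) := [exists u in S', e v u && M v c u (phi u)].

Definition residual_list (v : T) := [seq c <- L v | ~~ blocked v c].

Let inUl v : v \in S -> v \in S :|: S'. Proof. exact: subsetP (subsetUl S S') v. Qed.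
Let inUr v : v \in S' -> v \in S :|: S'. Proof. exact: subsetP (subsetUr S S') v. Qed.

Lemma uniq_residual_list v : v \in S -> uniq (residual_list v).
Proof. by move=> vS; apply/filter_uniq/LM.1/inUl. Qed.

Lemma size_residual_list v :
  v \in S -> size (L v) <= size (residual_list v) + deg_in e S' v.
Proof.
move=> vS; rewrite -(count_predC (fun c => ~~ blocked v c)) size_filter leq_add2l.
have -> : count (predC (fun c => ~~ blocked v c)) (L v) =
          count (fun c => [exists u in [set u in S' | e v u], M v c u (phi u)]) (L v).
  by apply: eq_count => c; rewrite /= negbK; apply: eq_existsb => u; rewrite inE andbA.
apply: count_matched_le; first exact/LM.1/inUl.
move=> u c c'; rewrite inE => /andP [uS' evu].
have euv : e u v by rewrite e_sym.
have [_ [M_sym M_fun]] := LM.2 u v (inUr uS') (inUl vS) euv.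
by rewrite -!M_sym; apply: M_fun.
Qed.

Lemma glue_colouring psi :
  LM_colouring e S residual_list M psi ->
  LM_colouring e (S :|: S') L M (fun v => if v \in S then psi v else phi v).
Proof.
move=> [psiL psiM]; have [phiL phiM] := phi_col.
have cross u v : u \in S -> v \in S' -> e u v -> ~~ M u (psi u) v (phi v).
  move=> uS vS' euv; have := psiL u uS; rewrite mem_filter => /andP [+ _].
  by apply: contra => Mu; apply/existsP; exists v; rewrite vS' euv.
split=> [v | u v].
  rewrite inE; case: ifP => [vS _ | _ /= vS']; last exact: phiL.
  by have := psiL v vS; rewrite mem_filter => /andP [].
move=> uU vU euv; have [_ [M_sym _]] := LM.2 u v uU vU euv.
move: uU vU; rewrite !inE.
case: ifP => uS /= uU; case: ifP => vS /= vU.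
- exact: psiM.
- exact: cross.
- by rewrite M_sym; apply: cross; rewrite // e_sym.
- exact: phiM.
Qed.

End Residual.

Lemma corr_deletable_setU (T : finType) (e : rel T) (A : {set T}) (r : nat)
    (S S' : {set T}) :
  symmetric e -> corr_deletable e A r S -> corr_deletable e (A :\: S) r S' ->
  corr_deletable e A r (S :|: S').
Proof.
move=> e_sym [SA [S0 S_del]] [S'AS [_ S'_del]].
have /andP [S'A S'S_dis] : (S' \subset A) && [disjoint S' & S] by rewrite -subsetD.
split; first by rewrite subUset SA.
split; first by rewrite setU_eq0 negb_and S0.
move=> L M LM L_size.
have degA v : deg_in e A v = deg_in e S v + deg_in e (A :\: S) v.
  by rewrite -(deg_inID e A S) (setIidPr SA).
have degU v : deg_in e (S :|: S') v = deg_in e S v + deg_in e S' v.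
  by rewrite -(deg_inID e _ S) setUK setDUl setDv set0U (setDidPl S'S_dis).
have degS' v : deg_in e S' v <= deg_in e (A :\: S) v by apply: deg_inS S'AS.
have [phi phi_col] : exists phi, LM_colouring e S' L M phi.
  apply: S'_del; first exact: corr_assignmentS (subsetUr S S') LM.
  move=> v vS'; have := L_size v (subsetP (subsetUr S S') v vS'); rewrite degA degU.
  by have := degS' v; lia.
pose L' := residual_list e S' L M phi.
have [psi /LM_colouring_restrict psi_col] :
    exists psi, LM_colouring e S L' (restrict_match L' M) psi.
  apply: S_del.
    exact: corr_assignment_restrict (corr_assignmentS (subsetUl S S') LM)
                                    (uniq_residual_list LM phi).
  move=> v vS; have := L_size v (subsetP (subsetUl S S') v vS).
  have := size_residual_list e_sym LM phi vS; rewrite /L' degA degU.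
  by have := degS' v; lia.
by eexists; apply: glue_colouring psi_col.
Qed.

Theorem mainTheorem17 (T : finType) (e : rel T) (r : nat) (S : {set T}) :
  symmetric e -> irreflexive e ->
  corr_deletable e [set: T] r S ->
  (forall S' : {set T}, S \proper S' -> ~ corr_deletable e [set: T] r S') ->
  forall S' : {set T}, ~ corr_deletable e (~: S) r S'.
Proof.
move=> e_sym _ S_del S_max S' S'_del.
have [S'_sub [S'0 _]] := S'_del.
apply: (S_max (S :|: S')).
  apply: properUl; apply: contra S'0 => S'S.
  by rewrite -subset0 -(setICr S) subsetI S'S.
by apply: corr_deletable_setU; rewrite ?setTD.
Qed.
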